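(* Let $g$, $\mathbf{g}=g^{\oplus n}$ be as in the context, and let $\mathbf{A},\mathbf{B},\mathbf{C},\mathbf{D}$ be linear operators on $\mathbf{g}$ with components $A_{ij},B_{ij},C_{ij},D_{ij}$ such that $A_{ij}^*=-A_{ji}$, $D_{ij}^*=-D_{ji}$, $B_{ij}^*=C_{ji}$ and such that PB$(\mathbf{A},\mathbf{B},\mathbf{C},\mathbf{D})$ is a Poisson bracket on $\mathbf{g}$. Let $\varphi$ be a smooth Ad-invariant function on $g$ and $\Phi(\mathbf{u})=\varphi(u_n\cdots u_1)$. For $1\le j\le n$ put $T_j=u_j\cdots u_1\cdot u_n\cdots u_{j+1}$ (so $T_n=u_n\cdots u_1$). Then the Hamiltonian equations of motion on $\mathbf{g}$ generated by $\Phi$ are $\dot u_i=u_i\,\mathcal{R}_i-\mathcal{L}_i\,u_i$, $i=1,\dots,n$, where $\mathcal{R}_i=\sum_{j=1}^n\big(A_{i,j+1}+B_{i,j}\big)\big(d\varphi(T_j)\big)$ and $\mathcal{L}_i=\sum_{j=1}^n\big(D_{i,j}+C_{i,j+1}\big)\big(d\varphi(T_j)\big)$, with subscripts taken mod $n$ (so $A_{i,n+1}=A_{i,1}$, $C_{i,n+1}=C_{i,1}$).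
   Context: $g$ is an associative algebra with a nondegenerate symmetric bilinear form $\langle\cdot,\cdot\rangle$ with $\langle uv,w\rangle=\langle u,vw\rangle$; $X^*$ denotes the adjoint of a linear operator $X$ on $g$. For smooth $\varphi$ on $g$, $\nabla\varphi(u)$ is defined by $\langle\nabla\varphi(u),X\rangle=\frac{d}{d\varepsilon}\varphi(u+\varepsilon X)|_{\varepsilon=0}$, $d\varphi(u)=u\nabla\varphi(u)$, $d'\varphi(u)=\nabla\varphi(u)u$. $\varphi$ is Ad-invariant if $\varphi(huh^{-1})=\varphi(u)$ for invertible $h$ (equivalently $d\varphi=d'\varphi$). $\mathbf{g}=g\oplus\cdots\oplus g$ ($n$ copies), componentwise multiplication, form $\langle\langle\mathbf{u},\mathbf{v}\rangle\rangle=\sum_k\langle u_k,v_k\rangle$. Components of an operator: $(\mathbf{A}(\mathbf{u}))_i=\sum_j A_{ij}(u_j)$. For smooth $\Phi$ on $\mathbf{g}$, $\nabla_j\Phi$ is the $j$-th component of its gradient, $d_j\Phi=u_j\nabla_j\Phi$, $d'_j\Phi=\nabla_j\Phi\,u_j$, and PB$(\mathbf{A},\mathbf{B},\mathbf{C},\mathbf{D})$ is $\{\Phi,\Psi\}(\mathbf{u})=\sum_{i,j}\big(\langle A_{ij}(d'_j\Phi),d'_i\Psi\rangle-\langle D_{ij}(d_j\Phi),d_i\Psi\rangle+\langle B_{ij}(d_j\Phi),d'_i\Psi\rangle-\langle C_{ij}(d'_j\Phi),d_i\Psi\rangle\big)$. The Hamiltonian equations generated by $\Phi$ are the equations $\frac{d}{dt}\ell(\mathbf{u})=\{\Phi,\ell\}(\mathbf{u})$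 for all linear functions $\ell$ on $\mathbf{g}$. *)

From HB Require Import structures.
From mathcomp Require Import all_boot all_order all_algebra all_field.
From mathcomp Require Import all_classical all_reals all_analysis.
Set Implicit Arguments. Unset Strict Implicit. Unset Printing Implicit Defensive.
Import Order.TTheory GRing.Theory Num.Theory.
Import numFieldNormedType.Exports.
Local Open Scope ring_scope.
Local Open Scope classical_set_scope.

Section Defs.
Variable R : realType.

(* A finite dimensional real vector space V carries its canonical topology,   *)
(* transported from R^(dim V) by the coordinate isomorphism of a basis.     *)
Fixpoint Ck (m : nat) (k : nat) (F : 'rV[R]_m -> R) : Prop :=
  continuous F /\
  match k with
  | 0 => True
  | k'.+1 => forall v : 'rV[R]_m, (forall x, derivable F x v) /\ Ck k' ('D_v F)
  end.

Definition smooth (V : vectType R) (f : V -> R) : Prop :=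
  forall k, Ck k (fun r : 'rV[R]_(\dim {:V}) => f (\sum_(i < \dim {:V}) r 0 i *: (vbasis {:V})`_i)).

Variable g : falgType R.
Variable form : g -> g -> R.

Definition grad (phi : g -> R) (u : g) : g :=
  xget 0 [set G : g | forall X : g,
            is_derive (0 : R) 1 (fun e : R => phi (u + e *: X)) (form G X)].

Definition dphi (phi : g -> R) (u : g) : g := u * grad phi u.
Definition dphi' (phi : g -> R) (u : g) : g := grad phi u * u.

Definition Ad_invariant (phi : g -> R) : Prop :=
  forall h u : g, h \is a GRing.unit -> phi (h * u * h^-1) = phi u.

Variable n : nat.
Notation gn := {ffun 'I_n -> g}.

Definition gradn (Phi : gn -> R) (u : gn) : gn :=
  xget 0 [set G : gn | forall X : gn,
            is_derive (0 : R) 1 (fun e : R => Phi (u + e *: X))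
                      (\sum_(k < n) form (G k) (X k))].

Definition dj (Phi : gn -> R) (u : gn) (j : 'I_n) : g := u j * gradn Phi u j.
Definition dj' (Phi : gn -> R) (u : gn) (j : 'I_n) : g := gradn Phi u j * u j.

Definition PB (A B C D : 'I_n -> 'I_n -> 'End(g)) (Phi Psi : gn -> R) (u : gn)
  : R :=
  \sum_(i < n) \sum_(j < n)
    (  form (A i j (dj' Phi u j)) (dj' Psi u i)
     - form (D i j (dj Phi u j)) (dj Psi u i)
     + form (B i j (dj Phi u j)) (dj' Psi u i)
     - form (C i j (dj' Phi u j)) (dj Psi u i)).

(* PB is a Poisson bracket: (bilinearity and Leibniz rule hold by the form of *)
(* the bracket) skew-symmetry and Jacobi identity on smooth functions.        *)
Definition is_Poisson (A B C D : 'I_n -> 'I_n -> 'End(g)) : Prop :=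
  forall F G H : gn -> R, smooth F -> smooth G -> smooth H ->
    (forall u, PB A B C D F G u = - PB A B C D G F u) /\
    (forall u, PB A B C D F (PB A B C D G H) u
             + PB A B C D G (PB A B C D H F) u
             + PB A B C D H (PB A B C D F G) u = 0).

(* u_n ... u_1  (0-based: u_{n-1} ... u_0) *)
Definition prod_all (u : gn) : g := \prod_(k < n) u (rev_ord k).

(* T_j = u_j ... u_1 . u_n ... u_{j+1} = product of u_{j-k mod n}, k = 0..n-1 *)
Definition Tj (u : gn) (j : 'I_n) : g := \prod_(k < n) u (iter k (@ord_pred n) j).

End Defs.

(* An Ad-invariant phi satisfies phi (a b) = phi (b a): conjugation by a + t gives
   phi ((a + t) b) = phi (b (a + t)) whenever a + t is a unit, i.e. for all but
   finitely many t, and phi is continuous.  Differentiating yields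
   grad phi (a b) a = a grad phi (b a).
   The gradient of Phi u = phi (u_n ... u_1) has k-th component
   (u_(k-1) ... u_1) grad phi (u_n ... u_1) (u_n ... u_(k+1)), so by that identity
   both u_k grad_k Phi and grad_(k+1) Phi u_(k+1) equal dphi (T_k).  A linear l has
   constant gradient, with l X = <<grad l, X>>; substituting both gradients into PB
   and moving u_i across the invariant form gives <<grad l, u R - L u>> = l (u R - L u).
   Since gradients are defined by a choice operator, each one is pinned down by the
   Riesz representation for the nondegenerate form and the chain rule for C^1
   functions along curves. *)

From mathcomp Require Import all_boot all_order all_algebra all_field.
From mathcomp Require Import all_classical all_reals all_analysis.
From mathcomp Require Import zify.
Set Implicit Arguments. Unset Strict Implicit. Unset Printing Implicit Defensive.
Import Order.TTheory GRing.Theory Num.Theory.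
Import numFieldNormedType.Exports passmx.
Local Open Scope ring_scope.
Local Open Scope classical_set_scope.

Local Notation coords := (rVof (vbasis fullv)).
Local Notation of_coords := (vecof (vbasis fullv)).

Lemma coordsK (K : fieldType) (V : vectType K) :
  cancel (rVof (vbasis (@fullv K V))) of_coords.
Proof. exact: rVofK (vbasisP fullv). Qed.

Lemma cvg_sum (R : numFieldType) (V : normedModType R) (T : Type)
    (F : set_system T) {FF : Filter F} (I : Type) (r : seq I) (P : pred I)
    (f : I -> T -> V) (l : I -> V) :
  (forall i, f i x @[x --> F] --> l i) ->
  \sum_(i <- r | P i) f i x @[x --> F] --> \sum_(i <- r | P i) l i.
Proof. by move=> fl; apply: (cvg_big add_continuous) => // i _; exact: fl. Qed.

Lemma is_derive0_quotient (R : realType) (f : R -> R) (l : R) :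
  e^-1 * (f e - f 0) @[e --> 0^'] --> l -> is_derive (0 : R) (1 : R) f l.
Proof.
have E : (fun h : R => h^-1 *: ((f \o shift 0) (h *: 1) - f 0)) =
          (fun e => e^-1 * (f e - f 0)).
  by apply/funext => h /=; rewrite [_%:A]mulr1 addr0.
move=> fl; split; first by rewrite /derivable E; exact: cvgP fl.
by rewrite /derive E; exact: cvg_lim.
Qed.

Section C1Function.
Variables (R : realType) (m : nat) (F : 'rV[R]_m -> R).
Hypotheses (F_cont : continuous F) (F_derivable : forall x v, derivable F x v)
  (DF_cont : forall v, continuous ('D_v F)).

Lemma is_derive_line (y w : 'rV[R]_m) (r : R) :
  is_derive r 1 (fun s : R => F (s *: w + y)) ('D_w F (r *: w + y)).
Proof.
have E : (fun t : R => t^-1 *: (((fun s : R => F (s *: w + y)) \o shift r) (t *: 1)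
             - F (r *: w + y))) =
         (fun t : R => t^-1 *: ((F \o shift (r *: w + y)) (t *: w) - F (r *: w + y))).
  by apply/funext => t /=; rewrite [_%:A]mulr1 scalerDl addrA.
by split; [rewrite /derivable E; exact: F_derivable | rewrite /derive E].
Qed.

Lemma continuous_line (y w : 'rV[R]_m) : continuous (fun s : R => F (s *: w + y)).
Proof.
move=> r; apply: (@continuous_comp _ _ _ (fun s : R => s *: w + y) F); last exact: F_cont.
by apply: cvgD; [apply: cvgZ; [exact: cvg_id | exact: cvg_cst] | exact: cvg_cst].
Qed.

Lemma mean_value_line (y w : 'rV[R]_m) (s : R) :
  exists t, `|t| <= `|s| /\ F (s *: w + y) - F y = s * 'D_w F (t *: w + y).
Proof.
have der x := is_derive_line y w x.
rewrite -[in F y](add0r y) -[in 0 + y](scale0r w).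
have cont := continuous_subspaceT (@continuous_line y w).
case: (lerP 0 s) => s0.
  have [t /andP[t0 ts] ->] := MVT_segment s0 (fun x _ => der x) (cont _).
  by exists t; rewrite subr0 mulrC !ger0_norm ?(le_trans t0 ts).
have [t /andP[st t0] E] := MVT_segment (ltW s0) (fun x _ => der x) (cont _).
exists t; rewrite -opprB E sub0r mulrN opprK mulrC.
by rewrite !ler0_norm ?lerN2 ?(ltW s0).
Qed.

Lemma cvg_quotient_step (x w : 'rV[R]_m) (y : R -> 'rV[R]_m) (c : R -> R) (c0 : R) :
  y e @[e --> 0^'] --> x -> c e @[e --> 0^'] --> c0 ->
  e^-1 * (F ((e * c e) *: w + y e) - F (y e)) @[e --> 0^'] --> c0 * 'D_w F x.
Proof.
move=> yx cc0.
have /choice [t Ht] := fun e => mean_value_line (y e) w (e * c e).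
have ec0 : e * c e @[e --> 0^'] --> 0 * c0 by apply: cvgM => //; exact: nbhs_dnbhs.
rewrite mul0r in ec0.
have t0 : t e @[e --> 0^'] --> 0.
  apply/cvgr0Pnorm_le => eps eps0; near=> e; apply: le_trans (Ht e).1 _.
  by near: e; exact: cvgr0_norm_le.
apply: (@cvg_trans _ ((fun e => c e * 'D_w F (t e *: w + y e)) @ 0^')).
  apply: near_eq_cvg; near=> e.
  have e0 : e != 0 by near: e; exact: nbhs_dnbhs_neq.
  by rewrite (Ht e).2 !mulrA mulVf ?mul1r.
apply: cvgM => //.
apply: (cvg_comp (fun e => t e *: w + y e) ('D_w F)); last exact: DF_cont.
by rewrite -[x]add0r -(scale0r w); apply: cvgD => //; apply: cvgZ => //; exact: cvg_cst.
Unshelve. all: by end_near.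
Qed.

Lemma cvg_row_entry (w : R -> 'rV[R]_m) (w0 : 'rV[R]_m) k :
  w e @[e --> 0^'] --> w0 -> w e 0 k @[e --> 0^'] --> w0 0 k.
Proof.
by move=> ww0; apply: (cvg_comp w (fun M => M 0 k) ww0); exact: coord_continuous.
Qed.

(* Telescope [F (x + e w e) - F x] one coordinate direction at a time. *)
Lemma cvg_quotient_coord (x : 'rV[R]_m) (w : R -> 'rV[R]_m) (w0 : 'rV[R]_m) :
  w e @[e --> 0^'] --> w0 ->
  e^-1 * (F (e *: w e + x) - F x) @[e --> 0^'] -->
    \sum_(k < m) w0 0 k * 'D_('e_k) F x.
Proof.
move=> ww0.
pose s (j : nat) (e : R) := \sum_(i < m | (i < j)%N) (e * w e 0 i) *: ('e_i : 'rV[R]_m).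
have sS e (k : 'I_m) : s k.+1 e = (e * w e 0 k) *: 'e_k + s k e.
  rewrite /s (bigD1 k) //=; congr (_ + _); apply: eq_bigl => i.
  by rewrite ltnS ltn_neqAle andbC.
have sm e : s m e = e *: w e.
  rewrite /s {2}(row_sum_delta (w e)) scaler_sumr.
  by apply: eq_big => // i; [rewrite ltn_ord | move=> _; rewrite scalerA].
have s0 e : s 0%N e = 0 by rewrite /s big_pred0.
have -> : (fun e => e^-1 * (F (e *: w e + x) - F x)) = (fun e => \sum_(k < m)
    e^-1 * (F ((e * w e 0 k) *: 'e_k + (s k e + x)) - F (s k e + x))).
  apply/funext => e; rewrite -mulr_sumr -sm -[in F x](add0r x) -(s0 e).
  rewrite -(telescope_sumr (fun j => F (s j e + x)) (leq0n m)) big_mkord.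
  by congr (_ * _); apply: eq_bigr => k _; rewrite sS addrA.
apply: cvg_sum => k; apply: cvg_quotient_step; last exact: cvg_row_entry.
rewrite -[x in _ --> x]add0r; apply: cvgD; last exact: cvg_cst.
rewrite -(scale0r (\sum_(i < m | (i < k)%N) w0 0 i *: ('e_i : 'rV[R]_m))).
have -> : s k = fun e => e *: \sum_(i < m | (i < k)%N) w e 0 i *: ('e_i : 'rV[R]_m).
  by apply/funext => e; rewrite scaler_sumr; apply: eq_bigr => i _; rewrite scalerA.
apply: cvgZ; first exact: nbhs_dnbhs.
by apply: cvg_sum => i; apply: cvgZ; [exact: cvg_row_entry | exact: cvg_cst].
Qed.

Lemma deriveE_coord (x v : 'rV[R]_m) : 'D_v F x = \sum_(k < m) v 0 k * 'D_('e_k) F x.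
Proof.
have Dv : e^-1 * (F (e *: v + x) - F x) @[e --> 0^'] --> 'D_v F x.
  by have /cvg_ex [l Fl] := @F_derivable x v; rewrite /derive (cvg_lim _ Fl).
have Dsum : e^-1 * (F (e *: v + x) - F x) @[e --> 0^'] -->
    \sum_(k < m) v 0 k * 'D_('e_k) F x.
  by apply: (@cvg_quotient_coord x (fun=> v)); exact: cvg_cst.
exact: (cvg_unique _ Dv Dsum).
Qed.

Lemma cvg_quotient (x : 'rV[R]_m) (w : R -> 'rV[R]_m) (w0 : 'rV[R]_m) :
  w e @[e --> 0^'] --> w0 ->
  e^-1 * (F (e *: w e + x) - F x) @[e --> 0^'] --> 'D_w0 F x.
Proof. by rewrite deriveE_coord; exact: cvg_quotient_coord. Qed.

End C1Function.

Section LinearFunctional.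
Variables (K : pzRingType) (V : lmodType K).

Definition linear_functional (f : V -> K) :=
  forall a x y, f (a *: x + y) = a * f x + f y.

Variables (f : V -> K) (f_lin : linear_functional f).

Lemma functional0 : f 0 = 0.
Proof. by have := f_lin (-1) 0 0; rewrite scaleN1r oppr0 addr0 mulN1r addNr. Qed.

Lemma functionalD x y : f (x + y) = f x + f y.
Proof. by have := f_lin 1 x y; rewrite scale1r mul1r. Qed.

Lemma functionalZ a x : f (a *: x) = a * f x.
Proof. by have := f_lin a x 0; rewrite !addr0 functional0 addr0. Qed.

Lemma functionalN x : f (- x) = - f x.
Proof. by rewrite -scaleN1r functionalZ mulN1r. Qed.

Lemma functional_sum I (r : seq I) (P : pred I) (F : I -> V) :
  f (\sum_(i <- r | P i) F i) = \sum_(i <- r | P i) f (F i).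
Proof. exact: (big_morph f functionalD functional0). Qed.

End LinearFunctional.

Section NondegenerateForm.
Variables (K : fieldType) (V : vectType K) (b : V -> V -> K).
Hypotheses (b_linl : forall v, linear_functional (b^~ v))
  (b_sym : forall u v, b u v = b v u)
  (b_nondeg : forall u, (forall v, b u v = 0) -> u = 0).

Lemma b_linr u : linear_functional (b u).
Proof. by move=> a x y; rewrite !(b_sym u) b_linl. Qed.

Lemma b_inj G1 G2 : (forall X, b G1 X = b G2 X) -> G1 = G2.
Proof.
move=> bG; apply/eqP; rewrite -subr_eq0; apply/eqP/b_nondeg => v.
by rewrite (functionalD (b_linl v)) (functionalN (b_linl v)) bG subrr.
Qed.

Local Notation m := (\dim (@fullv K V)).
Local Notation bs := (vbasis fullv).

Lemma functional_of_coords (f : V -> K) r : linear_functional f ->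
  f (of_coords r) = \sum_i r 0 i * f bs`_i.
Proof.
move=> f_lin; rewrite (functional_sum f_lin).
by apply: eq_bigr => i _; rewrite (functionalZ f_lin).
Qed.

(* The Gram matrix of [b] in the basis [bs] is invertible by nondegeneracy. *)
Lemma riesz (f : V -> K) : linear_functional f -> exists G, forall X, b G X = f X.
Proof.
move=> f_lin; pose Gram : 'M[K]_m := \matrix_(i, j) b bs`_i bs`_j.
have bGram r (j : 'I_m) : b (of_coords r) bs`_j = (r *m Gram) 0 j.
  by rewrite (functional_of_coords _ (b_linl _)) !mxE; apply: eq_bigr => i _; rewrite mxE.
have Gram_unit : Gram \in unitmx.
  rewrite -row_free_unit -kermx_eq0; apply/eqP/row_matrixP => i.
  rewrite row0; set r := row i _.
  have rGram : r *m Gram = 0 by rewrite -row_mul mulmx_ker row0.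
  apply/eqP; rewrite -(vecof_eq0 (vbasisP fullv)); apply/eqP/b_nondeg => v.
  rewrite -(coordsK v) (functional_of_coords _ (b_linr _)).
  by rewrite big1 // => k _; rewrite bGram rGram !mxE mulr0.
exists (of_coords ((\row_j f bs`_j) *m invmx Gram)) => X.
rewrite -(coordsK X) (functional_of_coords _ (b_linr _)) (functional_of_coords _ f_lin).
by apply: eq_bigr => j _; rewrite bGram (mulmxKV Gram_unit) !mxE.
Qed.

End NondegenerateForm.

Section Gradient.
Variables (R : realType) (V : vectType R) (b : V -> V -> R).
Hypotheses (b_linl : forall v, linear_functional (b^~ v))
  (b_sym : forall u v, b u v = b v u)
  (b_nondeg : forall u, (forall v, b u v = 0) -> u = 0).

(* [grad form] and [gradn form] are, by conversion, [gradient form] and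
   [gradient formn]. *)
Definition gradient (f : V -> R) (u : V) : V :=
  xget 0 [set G : V | forall X : V,
            is_derive (0 : R) 1 (fun e : R => f (u + e *: X)) (b G X)].

Lemma gradientE f u G :
  (forall X, is_derive (0 : R) 1 (fun e : R => f (u + e *: X)) (b G X)) ->
  gradient f u = G.
Proof.
move=> fG; apply: xget_unique => // G' fG'; apply: b_inj => // X.
by case: (fG X) => _ <-; case: (fG' X) => _ <-.
Qed.

Lemma gradient_functional (l : V -> R) u : linear_functional l ->
  forall X, b (gradient l u) X = l X.
Proof.
move=> l_lin; have [G lG] := riesz b_linl b_sym b_nondeg l_lin.
suff -> : gradient l u = G by [].
apply: gradientE => X; rewrite lG; apply: is_derive0_quotient.
apply: (@cvg_trans _ ((fun=> l X) @ 0^')); last exact: cvg_cst.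
apply: near_eq_cvg; near=> e.
have e0 : e != 0 by near: e; exact: nbhs_dnbhs_neq.
by rewrite scale0r addr0 (addrC u) l_lin addrK mulrA mulVf ?mul1r.
Unshelve. all: by end_near.
Qed.

(* [V] carries no norm of its own, so the velocity is a limit taken in coordinates. *)
Definition tangent (c : R -> V) (x v : V) := exists w : R -> V,
  (forall e, c e = x + e *: w e) /\ coords (w e) @[e --> 0^'] --> coords v.

Lemma tangent_line x v : tangent (fun e => x + e *: v) x v.
Proof. by exists (fun=> v); split => //; exact: cvg_cst. Qed.

Lemma tangent_cst x : tangent (fun=> x) x 0.
Proof. by exists (fun=> 0); split => [e|]; [rewrite scaler0 addr0 | exact: cvg_cst]. Qed.

Lemma cvg_tangent c x v : tangent c x v -> coords (c e) @[e --> 0^'] --> coords x.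
Proof.
case=> w [cE wv].
have -> : (fun e => coords (c e)) = (fun e => coords x + e *: coords (w e)).
  by apply/funext => e; rewrite cE linearD linearZ.
rewrite -[X in _ --> X]addr0 -(scale0r (coords v)).
by apply: cvgD; [exact: cvg_cst | apply: cvgZ => //; exact: nbhs_dnbhs].
Qed.

Section SmoothFunction.
Variables (f : V -> R) (f_smooth : smooth f).
Local Notation m := (\dim (@fullv R V)).
Local Notation F := (fun r : 'rV[R]_m => f (of_coords r)).

Lemma smooth_C1 : [/\ continuous F, forall x v : 'rV[R]_m, derivable F x v &
  forall v : 'rV[R]_m, continuous ('D_v F)].
Proof.
have [F_cont DF] := f_smooth 1%N.
by split => // [x v | v]; [exact: (DF v).1 | exact: (DF v).2.1].
Qed.

Lemma is_derive_tangent c x v : tangent c x v ->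
  is_derive (0 : R) 1 (fun e => f (c e)) ('D_(coords v) F (coords x)).
Proof.
have [F_cont F_der DF_cont] := smooth_C1.
case=> w [cE wv]; apply: is_derive0_quotient.
have -> : (fun e => e^-1 * (f (c e) - f (c 0))) =
    (fun e => e^-1 * (F (e *: coords (w e) + coords x) - F (coords x))).
  apply/funext => e; rewrite !cE scale0r addr0 linearD linearZ /= !coordsK.
  by rewrite (addrC (e *: _)).
exact: (@cvg_quotient _ _ _ F_cont F_der DF_cont _ (fun e => coords (w e)) _ wv).
Qed.

Lemma gradient_smooth x Y : b (gradient f x) Y = 'D_(coords Y) F (coords x).
Proof.
have [F_cont F_der DF_cont] := smooth_C1.
have DF_lin : linear_functional (fun Y => 'D_(coords Y) F (coords x)).
  move=> a X Y'; rewrite !(deriveE_coord F_cont F_der DF_cont) linearP /=.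
  by rewrite mulr_sumr -big_split; apply: eq_bigr => k _; rewrite !mxE mulrDl mulrA.
have [G GD] := riesz b_linl b_sym b_nondeg DF_lin.
suff -> : gradient f x = G by [].
by apply: gradientE => X; rewrite GD; exact: is_derive_tangent (tangent_line x X).
Qed.

Lemma is_derive_gradient c x v : tangent c x v ->
  is_derive (0 : R) 1 (fun e => f (c e)) (b (gradient f x) v).
Proof. by rewrite gradient_smooth; exact: is_derive_tangent. Qed.

End SmoothFunction.

End Gradient.

Section DescendingProduct.
Variables (S : pzSemiRingType) (U : nat -> S).

Definition prod_desc (m k : nat) : S := \prod_(i < k - m) U (k - i.+1).

Lemma prod_desc_id m : prod_desc m m = 1.
Proof. by rewrite /prod_desc subnn big_ord0. Qed.

Lemma prod_descSr m k : (m <= k)%N -> prod_desc m k.+1 = U k * prod_desc m k.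
Proof.
move=> mk; rewrite /prod_desc subSn // big_ord_recl subn1.
by congr (_ * _); apply: eq_bigr => i _; rewrite /bump /= add1n subSS.
Qed.

Lemma prod_desc_cat m k p : (m <= k <= p)%N ->
  prod_desc m p = prod_desc k p * prod_desc m k.
Proof.
case/andP=> mk; elim: p => [|p IHp].
  by rewrite leqn0 => /eqP k0; rewrite k0 prod_desc_id mul1r.
rewrite leq_eqVlt => /orP[/eqP <- | kp]; first by rewrite prod_desc_id mul1r.
by rewrite !prod_descSr ?IHp ?mulrA // (leq_trans mk).
Qed.

Lemma prod_descSl m k : (m < k)%N -> prod_desc m k = prod_desc m.+1 k * U m.
Proof.
move=> mk; rewrite (@prod_desc_cat m m.+1 k) ?leqnSn //.
by rewrite prod_descSr // prod_desc_id mulr1.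
Qed.

End DescendingProduct.

Lemma poly_nonroot_between (K : realFieldType) (p : {poly K}) (d : K) :
  p != 0 -> 0 < d -> exists2 t, 0 < t < d & ~~ root p t.
Proof.
move=> p0 d0; apply: contrapT => noroot.
pose ts := [seq d / (k.+2)%:R | k <- iota 0 (size p)].
suff : (size ts < size p)%N by rewrite size_map size_iota ltnn.
apply: max_poly_roots => //.
  apply/allP => _ /mapP [k _ ->]; apply/negPn/negP => nr; apply: noroot.
  exists (d / k.+2%:R) => //; rewrite divr_gt0 ?ltr0n //=.
  by rewrite ltr_pdivrMr ?ltr0n // ltr_pMr // ltr1n.
rewrite map_inj_uniq ?iota_uniq // => i j /(mulfI (lt0r_neq0 d0)) /invr_inj /eqP.
by rewrite eqr_nat => /eqP [].
Qed.

Lemma continuous_off_roots_eq0 (K : realType) (p : {poly K}) (D : K -> K) :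
  p != 0 -> D t @[t --> 0] --> D 0 -> (forall t, ~~ root p t -> D t = 0) -> D 0 = 0.
Proof.
move=> p0 Dcont Dz; apply/eqP; apply: contraT => D0.
have /nbhs_ballP [d d0 Dnear] : \forall t \near 0, `|D 0 - D t| < `|D 0|.
  by apply: (cvgr_dist_lt _ _ Dcont); rewrite normr_gt0.
have [t /andP[t0 td] nr] := poly_nonroot_between p0 d0.
have : ball 0 d t by rewrite /ball /= sub0r normrN gtr0_norm.
by move/Dnear; rewrite (Dz t nr) subr0 ltxx.
Qed.

Section FiniteDimensionalAlgebra.
Variables (K : fieldType) (A : falgType K).

Lemma unit_of_mulr_inj (a : A) : (forall x, a * x = 0 -> x = 0) -> a \is a GRing.unit.
Proof.
move=> a_inj; have ker0 : lker (amull a) == 0%VS.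
  apply/lker0P => x y; rewrite !lfunE /= => axy.
  by apply/eqP; rewrite -subr_eq0; apply/eqP/a_inj; rewrite mulrBr axy subrr.
pose y := ((amull a)^-1)%VF 1.
have ay : a * y = 1 by have := lker0_lfunVK ker0 1; rewrite lfunE.
apply/unitrP; exists y; split => //; apply/eqP; rewrite -subr_eq0; apply/eqP/a_inj.
by rewrite mulrBr mulrA ay mul1r mulr1 subrr.
Qed.

(* [a + t] fails to be a unit only if [-t] is an eigenvalue of [x |-> a x]. *)
Lemma unit_add_scalar (a : A) (t : K) :
  ~~ root (char_poly (- mxof (vbasis fullv) (vbasis fullv) (amull a))) t ->
  a + t%:A \is a GRing.unit.
Proof.
move=> nr; apply: unit_of_mulr_inj => x ax0; apply/eqP; apply: contraNT nr => x0.
rewrite -eigenvalue_root_char; apply/eigenvalueP; exists (coords x); last first.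
  by rewrite -(vecof_eq0 (vbasisP fullv)) coordsK.
move/eqP: ax0; rewrite mulrDl mulr_algl addr_eq0 => /eqP ax.
by rewrite mulmxN -rVof_app ?vbasisP //= lfunE /= ax linearN linearZ opprK.
Qed.

End FiniteDimensionalAlgebra.

Section Algebra.
Variables (R : realType) (g : falgType R).

Local Notation m := (\dim (@fullv R g)).
Local Notation bs := (vbasis (@fullv R g)).

Lemma coords_mul (x y : g) : coords (x * y) =
  \sum_(i < m) \sum_(j < m) (coords x 0 i * coords y 0 j) *: coords (bs`_i * bs`_j).
Proof.
rewrite -{1}(coordsK x) -{1}(coordsK y) /vecof mulr_suml linear_sum.
apply: eq_bigr => i _; rewrite mulr_sumr linear_sum; apply: eq_bigr => j _.
by rewrite -scalerAl -scalerAr scalerA linearZ.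
Qed.

Lemma cvg_coords_mul (a b : R -> g) (a0 b0 : g) :
  coords (a e) @[e --> 0^'] --> coords a0 -> coords (b e) @[e --> 0^'] --> coords b0 ->
  coords (a e * b e) @[e --> 0^'] --> coords (a0 * b0).
Proof.
move=> aa0 bb0; rewrite coords_mul; under eq_cvg do rewrite coords_mul.
apply: cvg_sum => i; apply: cvg_sum => j; apply: cvgZ; last exact: cvg_cst.
by apply: cvgM; apply: cvg_row_entry.
Qed.

Lemma tangent_mul (c d : R -> g) x v y w : tangent c x v -> tangent d y w ->
  tangent (fun e => c e * d e) (x * y) (v * y + x * w).
Proof.
move=> cxv dyw; have dy := cvg_tangent dyw.
case: cxv => p [cE pv]; case: dyw => q [dE qw].
exists (fun e => p e * d e + x * q e); split.
  move=> e; rewrite cE mulrDl {1}dE mulrDr -scalerAl -scalerAr scalerDr.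
  by rewrite -addrA [X in _ + X]addrC.
under eq_cvg do rewrite linearD.
by rewrite linearD; apply: cvgD; apply: cvg_coords_mul => //; exact: cvg_cst.
Qed.

Lemma tangent_prod_desc (U X : nat -> g) k :
  tangent (fun e => prod_desc (fun i => U i + e *: X i) 0 k) (prod_desc U 0 k)
    (\sum_(j < k) prod_desc U j.+1 k * X j * prod_desc U 0 j).
Proof.
elim: k => [|k IHk].
  rewrite big_ord0 prod_desc_id; under eq_fun do rewrite prod_desc_id.
  exact: tangent_cst.
rewrite prod_descSr //; under eq_fun do rewrite prod_descSr //.
suff -> : \sum_(j < k.+1) prod_desc U j.+1 k.+1 * X j * prod_desc U 0 j =
    X k * prod_desc U 0 k + U k * \sum_(j < k) prod_desc U j.+1 k * X j * prod_desc U 0 j.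
  exact: tangent_mul (tangent_line _ _) IHk.
rewrite big_ord_recr /= prod_desc_id mul1r addrC mulr_sumr; congr (_ + _).
by apply: eq_bigr => j _; rewrite prod_descSr // !mulrA.
Qed.

Section AdInvariant.
Variables (phi : g -> R) (phi_smooth : smooth phi) (phi_Ad : Ad_invariant phi).

Lemma Ad_invariant_mulC a b : phi (a * b) = phi (b * a).
Proof.
have [F_cont _ _] := smooth_C1 phi_smooth.
pose M := mxof bs bs (amull a).
pose D t := phi ((a + t%:A) * b) - phi (b * (a + t%:A)).
apply/eqP; rewrite -subr_eq0; apply/eqP.
have -> : phi (a * b) - phi (b * a) = D 0 by rewrite /D scale0r addr0.
apply: (continuous_off_roots_eq0 (monic_neq0 (char_poly_monic (- M)))).
  have -> : D = fun t => phi (of_coords (t *: coords b + coords (a * b)))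
                       - phi (of_coords (t *: coords b + coords (b * a))).
    apply/funext => t; rewrite /D mulrDl mulrDr mulr_algl mulr_algr.
    by rewrite !linearD !linearZ /= !coordsK !(addrC (t *: b)).
  by apply: cvgB; exact: (@continuous_line _ _ _ F_cont).
move=> t /unit_add_scalar ut; apply/eqP; rewrite subr_eq0; apply/eqP.
by rewrite -{1}(mulrK ut ((a + t%:A) * b)) -(mulrA (a + t%:A) b) phi_Ad.
Qed.

Variables (form : g -> g -> R).
Hypotheses (form_linl : forall v, linear_functional (form^~ v))
  (form_sym : forall u v, form u v = form v u)
  (form_nondeg : forall u, (forall v, form u v = 0) -> u = 0)
  (form_inv : forall u v w, form (u * v) w = form u (v * w)).

Lemma is_derive_grad c x v : tangent c x v ->
  is_derive (0 : R) 1 (fun e => phi (c e)) (form (grad form phi x) v).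
Proof. exact: is_derive_gradient. Qed.

Lemma grad_mulC a b : grad form phi (a * b) * a = a * grad form phi (b * a).
Proof.
apply: (b_inj form_linl form_nondeg) => Y.
have Dab := is_derive_grad (tangent_line (a * b) (a * Y)).
have Dba := is_derive_grad (tangent_line (b * a) (Y * a)).
have E : (fun e => phi (a * b + e *: (a * Y))) = (fun e => phi (b * a + e *: (Y * a))).
  by apply/funext => e; rewrite scalerAr -mulrDr Ad_invariant_mulC mulrDl -scalerAl.
rewrite E in Dab; rewrite form_inv; case: Dab => _ <-; case: Dba => _ ->.
by rewrite [LHS]form_sym [LHS]form_inv form_sym.
Qed.

Lemma grad_comm x : grad form phi x * x = x * grad form phi x.
Proof. by have := grad_mulC x 1; rewrite mulr1 mul1r. Qed.

Variable n : nat.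
Local Notation gn := {ffun 'I_n -> g}.

Definition formn (G X : gn) : R := \sum_k form (G k) (X k).

Definition delta (k : 'I_n) (Y : g) : gn := [ffun j => if j == k then Y else 0].

Lemma formn_delta G k Y : formn G (delta k Y) = form (G k) Y.
Proof.
rewrite /formn (bigD1 k) //= ffunE eqxx big1 ?addr0 // => j /negbTE jk.
by rewrite ffunE jk (functional0 (b_linr form_linl form_sym _)).
Qed.

Lemma formn_linl v : linear_functional (formn^~ v).
Proof.
move=> a x y; rewrite /formn mulr_sumr -big_split; apply: eq_bigr => k _.
by rewrite !ffunE form_linl.
Qed.

Lemma formn_sym G X : formn G X = formn X G.
Proof. by apply: eq_bigr => k _; rewrite form_sym. Qed.

Lemma formn_nondeg G : (forall X, formn G X = 0) -> G = 0.
Proof.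
move=> G0; apply/ffunP => k; rewrite ffunE; apply: form_nondeg => Y.
by rewrite -formn_delta G0.
Qed.

Lemma gradn_functional (l : gn -> R) u : linear_functional l ->
  forall X, formn (gradn form l u) X = l X.
Proof. exact: (gradient_functional formn_linl formn_sym formn_nondeg). Qed.

(* Indexing by [nat] lets every block [u_(k-1) ... u_m] be written as a [prod_desc]. *)
Definition unat (u : gn) (i : nat) : g := if insub i is Some k then u k else 0.

Lemma unatE u (k : 'I_n) : unat u k = u k.
Proof. by rewrite /unat valK. Qed.

Lemma unat_line u X (e : R) i : unat (u + e *: X) i = unat u i + e *: unat X i.
Proof. by rewrite /unat; case: insub => [k|]; rewrite ?ffunE ?scaler0 ?addr0. Qed.

Lemma prod_all_desc u : prod_all u = prod_desc (unat u) 0 n.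
Proof. by rewrite /prod_desc subn0; apply: eq_bigr => k _; rewrite -unatE. Qed.

Lemma iter_ord_pred (j : 'I_n) k : (k < n)%N ->
  iter k (@ord_pred n) j = (if (k <= j)%N then j - k else n + j - k)%N :> nat.
Proof.
have jn := ltn_ord j.
elim: k => [|k IHk] kn; first by rewrite subn0.
rewrite iterS /= IHk ?(ltnW kn) // -subn1.
case: (leqP k j) => kj; case: (leqP k.+1 j) => Skj.
- by rewrite (_ : (j - k + n - 1 = j - k.+1 + n)%N) ?modnDr ?modn_small //; lia.
- by rewrite (_ : (j - k + n - 1 = n + j - k.+1)%N) ?modn_small //; lia.
- lia.
- by rewrite (_ : (n + j - k + n - 1 = n + j - k.+1 + n)%N) ?modnDr ?modn_small //; lia.
Qed.

Lemma Tj_desc u (j : 'I_n) :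
  Tj u j = prod_desc (unat u) 0 j.+1 * prod_desc (unat u) j.+1 n.
Proof.
have jn := ltn_ord j.
rewrite /Tj -(big_mkord xpredT (fun k => u (iter k (@ord_pred n) j))).
rewrite (big_cat_nat (leq0n j.+1) jn) /prod_desc subn0 big_mkord; congr (_ * _).
  apply: eq_bigr => i _; have ij : (i <= j)%N by rewrite -ltnS.
  have i_n : (i < n)%N := leq_trans (ltn_ord i) jn.
  by rewrite -unatE iter_ord_pred // ij; congr unat; lia.
rewrite -{1}(add0n j.+1) big_addn big_mkord; apply: eq_bigr => i _.
have i_n := ltn_ord i.
rewrite -unatE iter_ord_pred; last by lia.
by rewrite ifN; [congr unat; lia | rewrite -ltnNge; lia].
Qed.

Lemma form_cyc G a x b : form G (a * x * b) = form (b * G * a) x.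
Proof. by rewrite form_sym form_inv form_sym -form_inv. Qed.

Lemma gradn_prod_all u : gradn form (fun v => phi (prod_all v)) u =
  [ffun k : 'I_n => prod_desc (unat u) 0 k * grad form phi (prod_all u)
                    * prod_desc (unat u) k.+1 n].
Proof.
apply: (gradientE formn_linl formn_nondeg) => X.
have -> : (fun e => phi (prod_all (u + e *: X))) =
    (fun e => phi (prod_desc (fun i => unat u i + e *: unat X i) 0 n)).
  apply/funext => e; rewrite prod_all_desc; congr (phi (prod_desc _ 0 n)).
  exact/funext/unat_line.
set G := [ffun k => _]; have -> : formn G X = form (grad form phi (prod_all u))
    (\sum_(j < n) prod_desc (unat u) j.+1 n * unat X j * prod_desc (unat u) 0 j).
  rewrite (functional_sum (b_linr form_linl form_sym _)); apply: eq_bigr => k _.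
  by rewrite form_cyc ffunE unatE.
by rewrite prod_all_desc; exact: is_derive_grad (tangent_prod_desc _ _ _).
Qed.

Lemma form_sumD (F1 F2 : 'I_n -> g) v :
  form (\sum_j (F1 j + F2 j)) v = \sum_j form (F1 j) v + \sum_j form (F2 j) v.
Proof.
rewrite (functional_sum (form_linl v)) -big_split.
by apply: eq_bigr => j _; rewrite (functionalD (form_linl v)).
Qed.

Section ProductOfComponents.
Variable u : gn.
Local Notation Phi := (fun v : gn => phi (prod_all v)).
Local Notation P := (prod_desc (unat u)).

Lemma dphi_Tj j :
  dphi form phi (Tj u j) = P 0 j.+1 * grad form phi (prod_all u) * P j.+1 n.
Proof.
rewrite /dphi Tj_desc prod_all_desc (@prod_desc_cat _ _ 0 j.+1 n) ?ltn_ord //.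
by rewrite -[RHS]mulrA grad_mulC mulrA.
Qed.

Lemma dj_prod_all j : dj form Phi u j = dphi form phi (Tj u j).
Proof. by rewrite /dj gradn_prod_all ffunE dphi_Tj prod_descSr // unatE !mulrA. Qed.

Lemma dj'_prod_all j : dj' form Phi u (ordS j) = dphi form phi (Tj u j).
Proof.
rewrite /dj' gradn_prod_all ffunE dphi_Tj -unatE.
have jn := ltn_ord j; case: (ltnP j.+1 n) => [Sjn | nSj].
  have -> : nat_of_ord (ordS j) = j.+1 by rewrite /= modn_small.
  by rewrite (prod_descSl _ Sjn) !mulrA.
have Sjn : j.+1 = n by apply/eqP; rewrite eqn_leq jn nSj.
have -> : nat_of_ord (ordS j) = 0%N by rewrite /= Sjn modnn.
rewrite Sjn !prod_desc_id mul1r mulr1 -mulrA -prod_descSl ?(leq_trans _ jn) //.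
by rewrite -prod_all_desc grad_comm.
Qed.

Lemma PB_prod_all (A B C D : 'I_n -> 'I_n -> 'End(g)) (l : gn -> R) :
  linear_functional l ->
  let T j := dphi form phi (Tj u j) in
  PB form A B C D Phi l u =
  l [ffun i => u i * \sum_(j < n) (A i (ordS j) (T j) + B i j (T j))
               - (\sum_(j < n) (D i j (T j) + C i (ordS j) (T j))) * u i].
Proof.
move=> l_lin T; rewrite -(gradn_functional u l_lin) /PB /formn.
apply: eq_bigr => i _; rewrite ffunE; set G := gradn form l u.
have dj'E (E : 'I_n -> 'I_n -> 'End(g)) x :
    \sum_j form (E i j (dj' form Phi u j)) x = \sum_j form (E i (ordS j) (T j)) x.
  by rewrite (reindex_inj (@ordS_inj n)); apply: eq_bigr => j _; rewrite dj'_prod_all.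
have djE (E : 'I_n -> 'I_n -> 'End(g)) x :
    \sum_j form (E i j (dj form Phi u j)) x = \sum_j form (E i j (T j)) x.
  by apply: eq_bigr => j _; rewrite dj_prod_all.
rewrite !sumrB big_split /= sumrB !dj'E !djE /dj /dj' -/G.
have form_linr := b_linr form_linl form_sym (G i).
rewrite (functionalD form_linr) (functionalN form_linr) -[in RHS]form_inv.
rewrite [in RHS]form_sym [in X in _ = _ - X]form_sym form_inv !form_sumD.
by rewrite opprD addrA; congr (_ - _); rewrite addrAC.
Qed.

End ProductOfComponents.

End AdInvariant.

End Algebra.

Local Close Scope classical_set_scope.

Theorem proposition6 (R : realType) (g : falgType R) (form : g -> g -> R)
  (form_linl : forall (a : R) (u1 u2 v : g),
      form (a *: u1 + u2) v = a * form u1 v + form u2 v)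
  (form_sym : forall u v : g, form u v = form v u)
  (form_nondeg : forall u : g, (forall v : g, form u v = 0) -> u = 0)
  (form_inv : forall u v w : g, form (u * v) w = form u (v * w))
  (n : nat) (A B C D : 'I_n -> 'I_n -> 'End(g))
  (adjA : forall i j (x y : g), form (A i j x) y = - form x (A j i y))
  (adjD : forall i j (x y : g), form (D i j x) y = - form x (D j i y))
  (adjB : forall i j (x y : g), form (B i j x) y = form x (C j i y))
  (Poisson : is_Poisson form A B C D)
  (phi : g -> R) (phi_smooth : smooth phi) (phi_Ad : Ad_invariant phi) :
  let Phi := fun u : {ffun 'I_n -> g} => phi (prod_all u) in
  let Rc := fun (u : {ffun 'I_n -> g}) (i : 'I_n) =>
    \sum_(j < n) (A i (ordS j) (dphi form phi (Tj u j))
                  + B i j (dphi form phi (Tj u j))) in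
  let Lc := fun (u : {ffun 'I_n -> g}) (i : 'I_n) =>
    \sum_(j < n) (D i j (dphi form phi (Tj u j))
                  + C i (ordS j) (dphi form phi (Tj u j))) in
  forall (u : {ffun 'I_n -> g}) (l : {ffun 'I_n -> g} -> R),
    (forall (a : R) (x y : {ffun 'I_n -> g}), l (a *: x + y) = a * l x + l y) ->
    PB form A B C D Phi l u
      = l [ffun i => u i * Rc u i - Lc u i * u i].
Proof.
move=> Phi Rc Lc u l l_lin.
have form_linl' v : linear_functional (form^~ v) by move=> a x y; exact: form_linl.
exact: (PB_prod_all phi_smooth phi_Ad form_linl' form_sym form_nondeg form_inv
  u A B C D l_lin).
Qed.
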